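(* Let $\mathcal V$ be a finite set, let $P_h$ and $\pi$ be probability distributions on $\mathcal V$, let $x^*\in\arg\max_{x\in\mathcal V}P_h(x)$, and let $q:=1-P_h(x^* )$. Then for every subset $A\subseteq\mathcal V$, $$\pi(A)-P_h(A)\le \max\bigl\{1-\pi(x^* ),\,q\bigr\},$$ and moreover $$1-\pi(x^* )\le \sup\Bigl\{\lambda\in[0,1]:\ d_{\mathrm{kl}}(\lambda\,\|\,q)\le D_{\mathrm{KL}}(\pi\,\|\,P_h)\Bigr\}.$$
   Context: $\pi(A)=\sum_{x\in A}\pi(x)$; $D_{\mathrm{KL}}(\pi\|P_h)=\sum_x \pi(x)\log\frac{\pi(x)}{P_h(x)}\in[0,+\infty]$. The binary KL divergence is $d_{\mathrm{kl}}(p\|q):=p\log\frac{p}{q}+(1-p)\log\frac{1-p}{1-q}$ for $p,q\in[0,1]$, with the conventions $0\log(0/q):=0$ for $q\in[0,1]$ (including $0\log(0/0)=0$) and $b\log(b/0):=+\infty$ for $b>0$. *)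

From HB Require Import structures.
From mathcomp Require Import all_boot all_order all_algebra.
From mathcomp Require Import all_classical all_reals all_analysis.
Set Implicit Arguments. Unset Strict Implicit. Unset Printing Implicit Defensive.
Import Order.TTheory GRing.Theory Num.Theory.
Local Open Scope ring_scope.

Definition is_distr (R : realType) (V : finType) (p : V -> R) : Prop :=
  (forall x, 0 <= p x) /\ \sum_(x : V) p x = 1.

Definition pmass (R : realType) (V : finType) (p : V -> R) (A : {set V}) : R :=
  \sum_(x in A) p x.

(* a log(a/b) with the conventions 0 log(0/b) = 0 (incl. b = 0),
   a log(a/0) = +oo for a > 0; natural logarithm. Values in \bar R. *)
Definition xlogxy (R : realType) (a b : R) : \bar R :=
  if a == 0 then 0%E
  else if b == 0 then +oo%E
  else (a * ln (a / b))%:E.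

Definition KL (R : realType) (V : finType) (pi P : V -> R) : \bar R :=
  (\sum_(x : V) xlogxy (pi x) (P x))%E.

Definition dkl (R : realType) (p q : R) : \bar R :=
  (xlogxy p q + xlogxy (1 - p) (1 - q))%E.

From HB Require Import structures.
From mathcomp Require Import all_boot all_order all_algebra.
From mathcomp Require Import all_classical all_reals all_analysis.
From mathcomp Require Import ring lra.
Set Implicit Arguments. Unset Strict Implicit. Unset Printing Implicit Defensive.
Import Order.TTheory GRing.Theory Num.Theory.
Local Open Scope ring_scope.

(* The first bound splits on whether [xs] lies in [A]: if it does, [P_h(A) >= P_h(xs)];
   otherwise [A] misses [xs] and [pi(A) <= 1 - pi(xs)].  The second bound is the data
   processing inequality for the partition {xs}, complement of {xs}: by the log-sum
   inequality, coarse-graining [pi] and [P_h] to that partition can only decrease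
   the KL divergence, and the coarse-grained divergence is [d_kl(1 - pi(xs) || q)]. *)

Section DistrMass.
Variables (R : realType) (V : finType) (p : V -> R).
Hypothesis p_distr : is_distr p.

Lemma pmass_ge0 (A : {set V}) : 0 <= pmass p A.
Proof. by apply: sumr_ge0 => x _; case: p_distr. Qed.

Lemma pmass_setC (A : {set V}) : pmass p (~: A) = 1 - pmass p A.
Proof.
case: p_distr => _ <-; rewrite /pmass [in RHS](bigID (mem A)) /= addrC addrK.
by apply: eq_bigl => x; rewrite inE.
Qed.

Lemma pmass_set1 (x : V) : pmass p [set x] = p x.
Proof. exact: big_set1. Qed.

Lemma le_pmass_mem (x : V) (A : {set V}) : x \in A -> p x <= pmass p A.
Proof.
move=> xA; rewrite /pmass (bigD1 x) //= lerDl.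
by apply: sumr_ge0 => y _; case: p_distr.
Qed.

End DistrMass.

Lemma pmass_sub_le_max (R : realType) (V : finType) (Ph pi : V -> R) (y : V)
    (A : {set V}) :
  is_distr Ph -> is_distr pi ->
  pmass pi A - pmass Ph A <= Num.max (1 - pi y) (1 - Ph y).
Proof.
move=> Ph_distr pi_distr; rewrite le_max.
have [yA|yNA] := boolP (y \in A).
  have PhA := le_pmass_mem Ph_distr yA.
  have piA : pmass pi A <= 1 by rewrite -subr_ge0 -pmass_setC // pmass_ge0.
  by apply/orP; right; lra.
have yAc : y \in ~: A by rewrite inE.
have piAc := le_pmass_mem pi_distr yAc; rewrite pmass_setC // in piAc.
have PhA := pmass_ge0 Ph_distr A.
by apply/orP; left; lra.
Qed.

Lemma xlogxy_neqNy (R : realType) (a b : R) : xlogxy a b != -oo%E.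
Proof. by rewrite /xlogxy; case: ifP => //; case: ifP. Qed.

(* Fenchel-type lower bound: the concave function [b |-> a ln(a/b)] lies above each of
   its "tangents" [a ln c + a - b c]; this is [ln t <= t - 1] at [t = b c / a]. *)
Lemma xlogxy_ge_tangent (R : realType) (a b c : R) :
  0 <= a -> 0 <= b -> 0 < c -> ((a * ln c + a - b * c)%:E <= xlogxy a b)%E.
Proof.
move=> a_ge0 b_ge0 c_gt0; rewrite /xlogxy.
have [->|a_neq0] := eqVneq a 0.
  by rewrite lee_fin mul0r add0r sub0r oppr_le0 mulr_ge0 // ltW.
have [->|b_neq0] := eqVneq b 0; first exact: leey.
have a_gt0 : 0 < a by rewrite lt_def a_neq0.
have b_gt0 : 0 < b by rewrite lt_def b_neq0.
have ab_gt0 : 0 < a / b by rewrite divr_gt0.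
set t := c / (a / b).
have t_gt0 : 0 < t by rewrite divr_gt0.
have ln_t_le : ln t <= t - 1.
  by have := @le_ln1Dx R (t - 1); rewrite addrCA subrr addr0; apply; lra.
have ln_tE : ln t = ln c - ln (a / b) by rewrite /t ln_div.
have a_tE : a * t = b * c by rewrite /t; field; rewrite a_neq0 b_neq0.
have : a * ln t <= a * (t - 1) by rewrite ler_wpM2l // ltW.
by rewrite lee_fin ln_tE !mulrBr mulr1 a_tE; lra.
Qed.

Lemma xlogxy_sum_le (R : realType) (V : finType) (a b : V -> R) (P : pred V) :
  (forall x, 0 <= a x) -> (forall x, 0 <= b x) ->
  (xlogxy (\sum_(x | P x) a x) (\sum_(x | P x) b x)
     <= \sum_(x | P x) xlogxy (a x) (b x))%E.
Proof.
move=> a_ge0 b_ge0.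
set A := \sum_(x | P x) a x; set B := \sum_(x | P x) b x.
have [A0|A_neq0] := eqVneq A 0.
  rewrite {1}/xlogxy A0 eqxx; apply: sume_ge0 => x Px.
  by have /psumr_eq0P -> := A0; rewrite /xlogxy ?eqxx.
have A_gt0 : 0 < A by rewrite lt_def A_neq0 sumr_ge0.
have [B0|B_neq0] := eqVneq B 0.
  have b0 : forall x, P x -> b x = 0 by apply/psumr_eq0P.
  have /existsP [x /andP[Px ax_neq0]] : [exists x, P x && (a x != 0)].
    apply: contraT => /existsPn aP0; rewrite -(negbTE A_neq0); apply/eqP.
    by rewrite /A big1 // => x Px; have := aP0 x; rewrite Px negbK => /eqP.
  suff -> : (\sum_(x | P x) xlogxy (a x) (b x) = +oo)%E by apply: leey.
  apply/eqP; rewrite esum_eqy; last by move=> *; apply: xlogxy_neqNy.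
  by apply/existsP; exists x; rewrite /xlogxy (negbTE ax_neq0) b0 // eqxx andbT.
have B_gt0 : 0 < B by rewrite lt_def B_neq0 sumr_ge0.
(* The tangent at [c = A / B] is tight for the aggregated pair [(A, B)]. *)
have tangent x : ((a x * ln (A / B) + a x - b x * (A / B))%:E
                  <= xlogxy (a x) (b x))%E.
  exact: xlogxy_ge_tangent (a_ge0 x) (b_ge0 x) (divr_gt0 A_gt0 B_gt0).
apply: le_trans _ (@lee_sum _ _ _ _ _ P (fun x _ => tangent x)).
rewrite sumEFin /xlogxy (negbTE A_neq0) (negbTE B_neq0) lee_fin.
rewrite !big_split /= -!mulr_suml -/A sumrN -mulr_suml -/B.
by rewrite mulrCA divff // mulr1 addrK.
Qed.

Lemma dkl_pmass_le_KL (R : realType) (V : finType) (pi Ph : V -> R) (A : {set V}) :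
  is_distr pi -> is_distr Ph -> (dkl (pmass pi A) (pmass Ph A) <= KL pi Ph)%E.
Proof.
move=> pi_distr Ph_distr; have [pi_ge0 _] := pi_distr; have [Ph_ge0 _] := Ph_distr.
have pmass_setCE (p : V -> R) : pmass p (~: A) = \sum_(x | x \notin A) p x.
  by apply: eq_bigl => x; rewrite inE.
rewrite /dkl -!pmass_setC // /KL (bigID (mem A)) /= !pmass_setCE.
by apply: leeD; apply: xlogxy_sum_le.
Qed.

Theorem mainTheorem2 (R : realType) (V : finType) (Ph pi : V -> R) (xs : V) :
  is_distr Ph -> is_distr pi ->
  (forall x : V, Ph x <= Ph xs) ->
  (forall A : {set V},
      pmass pi A - pmass Ph A <= Num.max (1 - pi xs) (1 - Ph xs)) /\
  ((1 - pi xs)%:E <=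
     ereal_sup [set l%:E | l in
                  [set l : R | (0 <= l <= 1)%R /\ (dkl l (1 - Ph xs) <= KL pi Ph)%E]])%E.
Proof.
move=> Ph_distr pi_distr _.
split=> [A|]; first exact: pmass_sub_le_max.
have pi_compl : pmass pi (~: [set xs]) = 1 - pi xs by rewrite pmass_setC // pmass_set1.
apply: ereal_sup_ubound; exists (1 - pi xs) => //; split.
  have := pmass_ge0 pi_distr (~: [set xs]); have := pmass_ge0 pi_distr [set xs].
  by rewrite pi_compl pmass_set1 => *; apply/andP; split; lra.
by rewrite -pi_compl -(@pmass_set1 _ _ Ph) -pmass_setC // dkl_pmass_le_KL.
Qed.
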